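(* Let $p>0$, $m>0$, and let $N$ be a random variable on $\mathbb{N}_0$ with the arcsine probability mass function \[ f(n)=\mathbb{P}(N=n)=\nu(n)\,e^{n\theta(m)-\kappa(m)},\qquad \theta(m)=-\tfrac12\log\Big(1+\frac{p^2}{m^2}\Big),\quad \kappa(m)=p\arctan(m/p), \] where \[ \nu(2n)=\frac{1}{(2n)!}\prod_{i=0}^{n-1}\big((2i)^2+p^2\big),\qquad \nu(2n+1)=\frac{p}{(2n+1)!}\prod_{i=0}^{n-1}\big((2i+1)^2+p^2\big),\quad n\in\mathbb{N}_0 \] (empty products equal $1$). Let $b(n)=\frac{1}{\sqrt{n+1}}\big(\sqrt{1+\tfrac1n}-1\big)$ for $n\ge 1$, and define the probability mass function $b_2$ on $\{2,3,\dots\}$ by $b_2(2n)=b_2(2n+1)=\tfrac12 b(n)$ for $n\ge1$. Then there is a constant $C$ (not depending on $n$) such that \[ f(n\mid n\ge 2):=\mathbb{P}(N=n\mid N\ge 2)\le C\,b_2(n)\qquad\text{for all } n=2,3,\ldots. \]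
   Context: $b$ is the probability mass function of $\lfloor U^{-2}\rfloor$ for $U$ uniform on $(0,1)$, and $b_2$ is the law of $2Y$ or $2Y+1$ (each with probability $1/2$) with $Y\sim b$. The constant $C$ may depend on $p$ and $m$. *)

From Stdlib Require Import Reals Lra Arith.
Open Scope R_scope.

Fixpoint prodR (n : nat) (g : nat -> R) : R :=
  match n with
  | O => 1
  | S k => prodR k g * g k
  end.

Definition nu (p : R) (k : nat) : R :=
  if Nat.even k then
    / INR (fact k) * prodR (Nat.div2 k) (fun i => (2 * INR i) ^ 2 + p ^ 2)
  else
    p / INR (fact k) * prodR (Nat.div2 k) (fun i => (2 * INR i + 1) ^ 2 + p ^ 2).

Definition theta (p m : R) : R := - / 2 * ln (1 + p ^ 2 / m ^ 2).
Definition kappa (p m : R) : R := p * atan (m / p).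

Definition f_arcsine (p m : R) (n : nat) : R :=
  nu p n * exp (INR n * theta p m - kappa p m).

(* P(N = n | N >= 2) = f(n) / P(N >= 2), with P(N>=2) = 1 - f(0) - f(1) since f is a pmf *)
Definition f_cond2 (p m : R) (n : nat) : R :=
  f_arcsine p m n / (1 - f_arcsine p m 0 - f_arcsine p m 1).

Definition b (n : nat) : R := / sqrt (INR n + 1) * (sqrt (1 + / INR n) - 1).

(* b2(2n) = b2(2n+1) = b(n)/2 for n >= 1 (used for arguments >= 2) *)
Definition b2 (k : nat) : R := / 2 * b (Nat.div2 k).

(* The pmf satisfies the two-step recursion
   f(n+2) = f(n) (n^2+p^2)/((n+1)(n+2)) * m^2/(m^2+p^2), whose ratio tends to
   m^2/(m^2+p^2) < 1; in particular n^2 f(n) is eventually non-increasing along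
   steps of two, hence bounded.  On the other hand b(k) >= 1/(5k^2), so
   b_2(n) >= 1/(10n^2), and conditioning on N >= 2 only rescales f. *)
From Stdlib Require Import Reals.
From Stdlib Require Import Arith Lra Lia.
Open Scope R_scope.

Lemma prodR_nonneg (n : nat) (g : nat -> R) :
  (forall i, 0 <= g i) -> 0 <= prodR n g.
Proof.
  intros Hg; induction n as [|n IH]; simpl; [lra|].
  apply Rmult_le_pos; auto.
Qed.

Lemma nu_nonneg (p : R) (n : nat) : 0 <= p -> 0 <= nu p n.
Proof.
  intros hp; unfold nu.
  assert (Hf : 0 < / INR (fact n)) by (apply Rinv_0_lt_compat, lt_0_INR, lt_O_fact).
  destruct (Nat.even n); apply Rmult_le_pos;
    try (apply prodR_nonneg; intros i; apply Rplus_le_le_0_compat; apply pow2_ge_0).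
  - lra.
  - unfold Rdiv; apply Rmult_le_pos; lra.
Qed.

Lemma f_arcsine_nonneg (p m : R) (n : nat) : 0 <= p -> 0 <= f_arcsine p m n.
Proof.
  intros hp; unfold f_arcsine.
  apply Rmult_le_pos; [now apply nu_nonneg | left; apply exp_pos].
Qed.

Lemma INR_div2 (n : nat) :
  INR n = 2 * INR (Nat.div2 n) + (if Nat.even n then 0 else 1).
Proof.
  rewrite (Nat.div2_odd n) at 1.
  rewrite <- Nat.negb_even, plus_INR, mult_INR.
  destruct (Nat.even n); simpl; lra.
Qed.

Lemma nu_SS (p : R) (n : nat) :
  nu p (S (S n)) = nu p n * (INR n ^ 2 + p ^ 2) / (INR (S n) * INR (S (S n))).
Proof.
  unfold nu.
  change (Nat.even (S (S n))) with (Nat.even n).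
  change (Nat.div2 (S (S n))) with (S (Nat.div2 n)).
  rewrite (fact_simpl (S n)), (fact_simpl n), !mult_INR.
  pose proof (INR_div2 n) as Hdiv2.
  assert (0 < INR (fact n)) by (apply lt_0_INR, lt_O_fact).
  assert (0 < INR (S n)) by (apply lt_0_INR; lia).
  assert (0 < INR (S (S n))) by (apply lt_0_INR; lia).
  destruct (Nat.even n); simpl prodR;
    [ replace (2 * INR (Nat.div2 n)) with (INR n) by lra
    | replace (2 * INR (Nat.div2 n) + 1) with (INR n) by lra ];
    field; lra.
Qed.

Lemma exp_2theta (p m : R) : 0 < m -> exp (2 * theta p m) = m ^ 2 / (m ^ 2 + p ^ 2).
Proof.
  intros hm; unfold theta.
  assert (0 < m ^ 2) by (apply pow_lt; lra).
  assert (0 <= p ^ 2 / m ^ 2)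
    by (unfold Rdiv; apply Rmult_le_pos; [apply pow2_ge_0 | left; now apply Rinv_0_lt_compat]).
  replace (2 * (- / 2 * ln (1 + p ^ 2 / m ^ 2))) with (- ln (1 + p ^ 2 / m ^ 2)) by field.
  rewrite exp_Ropp, exp_ln by lra.
  field; split; [pose proof (pow2_ge_0 p) |]; lra.
Qed.

Lemma f_arcsine_SS (p m : R) (n : nat) : 0 < m ->
  f_arcsine p m (S (S n)) =
  f_arcsine p m n * ((INR n ^ 2 + p ^ 2) / (INR (S n) * INR (S (S n))))
    * (m ^ 2 / (m ^ 2 + p ^ 2)).
Proof.
  intros hm; unfold f_arcsine.
  rewrite nu_SS, <- (exp_2theta p m hm).
  replace (INR (S (S n)) * theta p m - kappa p m)
    with ((INR n * theta p m - kappa p m) + 2 * theta p m) by (rewrite !S_INR; ring).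
  rewrite exp_plus; unfold Rdiv; ring.
Qed.

Lemma arcsine_ratio_sq_le (p m x : R) : 0 < p ->
  m ^ 2 <= x * p ^ 2 -> m ^ 2 + 2 <= x ->
  (x + 2) ^ 2 * ((x ^ 2 + p ^ 2) / ((x + 1) * (x + 2))) * (m ^ 2 / (m ^ 2 + p ^ 2))
    <= x ^ 2.
Proof.
  intros hp Hxp Hxm.
  assert (Hm2 : 0 <= m ^ 2) by apply pow2_ge_0.
  assert (Hp2 : 0 < p ^ 2) by (apply pow_lt; lra).
  (* the difference of the two sides, once cleared of denominators *)
  assert (Hpoly : 0 <= x ^ 2 * (x * p ^ 2 - m ^ 2) + p ^ 2 * (x * (x - m ^ 2) - 2 * m ^ 2)).
  { assert (x * (x - m ^ 2) - 2 * m ^ 2 >= 0) by nra.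
    apply Rplus_le_le_0_compat; apply Rmult_le_pos; nra. }
  replace ((x + 2) ^ 2 * ((x ^ 2 + p ^ 2) / ((x + 1) * (x + 2))) * (m ^ 2 / (m ^ 2 + p ^ 2)))
    with ((x + 2) * (x ^ 2 + p ^ 2) * m ^ 2 / ((x + 1) * (m ^ 2 + p ^ 2))) by (field; lra).
  assert (Hpos : 0 < (x + 1) * (m ^ 2 + p ^ 2)) by nra.
  apply (Rmult_le_reg_r _ _ _ Hpos).
  unfold Rdiv; rewrite Rmult_assoc, Rinv_l by lra.
  nra.
Qed.

Lemma sq_mul_f_arcsine_SS_le (p m : R) (n : nat) : 0 < p -> 0 < m ->
  m ^ 2 <= INR n * p ^ 2 -> m ^ 2 + 2 <= INR n ->
  INR (S (S n)) ^ 2 * f_arcsine p m (S (S n)) <= INR n ^ 2 * f_arcsine p m n.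
Proof.
  intros hp hm Hxp Hxm.
  rewrite f_arcsine_SS by exact hm.
  replace (INR (S (S n))) with (INR n + 2) by (rewrite !S_INR; ring).
  replace (INR (S n)) with (INR n + 1) by (rewrite S_INR; ring).
  rewrite (Rmult_comm (INR n ^ 2)).
  match goal with
  | |- ?a * (?f * ?r * ?q) <= _ => replace (a * (f * r * q)) with (f * (a * r * q)) by ring
  end.
  apply Rmult_le_compat_l; [now apply f_arcsine_nonneg; lra |].
  now apply arcsine_ratio_sq_le.
Qed.

Lemma bounded_on_initial_segment (a : nat -> R) (K : nat) :
  exists M, forall n, (n <= K)%nat -> a n <= M.
Proof.
  induction K as [|K [M HM]].
  - exists (a 0%nat); intros n Hn; replace n with 0%nat by lia; lra.
  - exists (Rmax M (a (S K))); intros n Hn.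
    destruct (Nat.eq_dec n (S K)) as [-> | HnK]; [apply Rmax_r |].
    eapply Rle_trans; [apply HM; lia | apply Rmax_l].
Qed.

Lemma bounded_of_eventually_nonincreasing2 (a : nat -> R) (N : nat) :
  (forall n, (N <= n)%nat -> a (S (S n)) <= a n) ->
  exists M, forall n, a n <= M.
Proof.
  intros Hdecr.
  destruct (bounded_on_initial_segment a (S N)) as [M HM].
  exists M; intros n; induction n as [n IH] using lt_wf_ind.
  destruct (le_lt_dec n (S N)) as [Hle | Hlt]; [now apply HM |].
  destruct n as [|[|n]]; [lia | lia |].
  eapply Rle_trans; [apply Hdecr; lia | apply IH; lia].
Qed.

Lemma sq_mul_f_arcsine_bounded (p m : R) : 0 < p -> 0 < m ->
  exists M, forall n, INR n ^ 2 * f_arcsine p m n <= M.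
Proof.
  intros hp hm.
  assert (Hp2 : 0 < p ^ 2) by (apply pow_lt; lra).
  destruct (INR_unbounded (m ^ 2 / p ^ 2 + m ^ 2 + 2)) as [N HN].
  apply (bounded_of_eventually_nonincreasing2 _ N); intros n Hn.
  apply le_INR in Hn.
  assert (Hmp : 0 <= m ^ 2 / p ^ 2)
    by (apply Rmult_le_pos; [apply pow2_ge_0 | left; now apply Rinv_0_lt_compat]).
  apply sq_mul_f_arcsine_SS_le; try lra.
  replace (m ^ 2) with (m ^ 2 / p ^ 2 * p ^ 2) by (field; lra).
  pose proof (pow2_ge_0 m).
  apply Rmult_le_compat_r; lra.
Qed.

Lemma sqrt_1_plus_ge (y : R) : 0 <= y <= 1 -> 1 + 2 / 5 * y <= sqrt (1 + y).
Proof.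
  intros Hy.
  rewrite <- (sqrt_square (1 + 2 / 5 * y)) by lra.
  apply sqrt_le_1_alt; nra.
Qed.

Lemma sqrt_succ_le_double (x : R) : 1 <= x -> sqrt (x + 1) <= 2 * x.
Proof.
  intros Hx.
  rewrite <- (sqrt_square (2 * x)) by lra.
  apply sqrt_le_1_alt; nra.
Qed.

Lemma b_ge_inv_sq (k : nat) : (1 <= k)%nat -> / (5 * INR k ^ 2) <= b k.
Proof.
  intros Hk; unfold b.
  assert (Hx : 1 <= INR k) by (apply (le_INR 1); exact Hk).
  assert (Hy : 0 <= / INR k <= 1).
  { split; [left; apply Rinv_0_lt_compat; lra |].
    rewrite <- Rinv_1; apply Rinv_le_contravar; lra. }
  pose proof (sqrt_1_plus_ge _ Hy) as Hnum.
  pose proof (sqrt_succ_le_double _ Hx) as Hden.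
  assert (Hsqrt : 0 < sqrt (INR k + 1)) by (apply sqrt_lt_R0; lra).
  replace (/ (5 * INR k ^ 2)) with (/ (2 * INR k) * (2 / 5 * / INR k)) by (field; lra).
  apply Rmult_le_compat; try lra.
  - left; apply Rinv_0_lt_compat; lra.
  - now apply Rinv_le_contravar.
Qed.

Lemma b2_ge_inv_sq (n : nat) : (2 <= n)%nat -> / (10 * INR n ^ 2) <= b2 n.
Proof.
  intros Hn; unfold b2.
  pose proof (INR_div2 n) as Hdiv2.
  assert (Hk : (1 <= Nat.div2 n)%nat).
  { pose proof (Nat.div2_odd n); destruct (Nat.odd n); simpl in *; lia. }
  assert (Hk1 : 1 <= INR (Nat.div2 n)) by (apply (le_INR 1); exact Hk).
  assert (Hkn : INR (Nat.div2 n) ^ 2 <= INR n ^ 2)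
    by (apply pow_incr; destruct (Nat.even n); lra).
  assert (0 < INR (Nat.div2 n) ^ 2) by (apply pow_lt; lra).
  eapply Rle_trans; [| apply Rmult_le_compat_l; [lra | exact (b_ge_inv_sq _ Hk)]].
  rewrite <- Rinv_mult.
  apply Rinv_le_contravar; lra.
Qed.

Lemma f_arcsine_le_b2 (p m : R) : 0 < p -> 0 < m ->
  exists C, forall n, (2 <= n)%nat -> f_arcsine p m n <= C * b2 n.
Proof.
  intros hp hm.
  destruct (sq_mul_f_arcsine_bounded p m hp hm) as [M HM].
  assert (HM0 : 0 <= M).
  { eapply Rle_trans; [| apply (HM 0%nat)]; simpl; lra. }
  exists (10 * M); intros n Hn.
  assert (Hn0 : 0 < INR n) by (apply lt_0_INR; lia).
  assert (Hn2 : 0 < INR n ^ 2) by (apply pow_lt; exact Hn0).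
  apply Rle_trans with (10 * M * / (10 * INR n ^ 2));
    [| apply Rmult_le_compat_l; [lra | now apply b2_ge_inv_sq]].
  replace (10 * M * / (10 * INR n ^ 2)) with (M / INR n ^ 2) by (field; lra).
  apply (Rmult_le_reg_l (INR n ^ 2)); [exact Hn2 |].
  replace (INR n ^ 2 * (M / INR n ^ 2)) with M by (field; lra).
  apply HM.
Qed.

Theorem mainTheorem4 (p m : R) (hp : 0 < p) (hm : 0 < m) :
  exists C : R, forall n : nat, (2 <= n)%nat -> f_cond2 p m n <= C * b2 n.
Proof.
  destruct (f_arcsine_le_b2 p m hp hm) as [C HC].
  set (d := / (1 - f_arcsine p m 0 - f_arcsine p m 1)).
  (* using |d| spares us proving P(N >= 2) > 0 *)
  exists (Rabs d * C); intros n Hn.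
  unfold f_cond2, Rdiv; fold d.
  apply Rle_trans with (f_arcsine p m n * Rabs d).
  - apply Rmult_le_compat_l; [apply f_arcsine_nonneg; lra | apply Rle_abs].
  - rewrite Rmult_comm, Rmult_assoc.
    apply Rmult_le_compat_l; [apply Rabs_pos | now apply HC].
Qed.
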